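(* Let $U,V$ be molecules, $F\colon\mathsf{Mol}/U\to\mathsf{Mol}/V$ an active strict functor, and $\iota\colon W\sqsubseteq U$ a submolecule (regarded as an arrow of $\mathsf{Mol}/U$). Then the pasting diagram $F(\iota)\colon F(W)\to V$ is a submolecule inclusion.
   Context: Oriented graded posets: graded posets with, for each $x$, a partition of the elements covered by $x$ into input faces $\partial^-x$ and output faces $\partial^+x$; morphisms induce bijections on input/output faces; embeddings are injective morphisms. Molecules are Hadzihasanovic's class generated from the point $\mathbf{1}$ under pasting $U\#_kV$ (pushout along an isomorphism $\partial_k^+U\cong\partial_k^-V$ of boundaries) and under $U\Rightarrow V$ for round molecules of equal dimension with matching boundaries. Submolecule inclusions form the smallest class of embeddings of molecules containing isomorphisms, closed under composition, and containing $U\hookrightarrow U\#_kV$ and $V\hookrightarrow U\#_kV$; $W\sqsubseteq U$ means the inclusion of $W$ is one. $\mathsf{Mol}/U$ is the strict $\omega$-category whose $k$-arrows are morphisms $W\to U$ of oriented graded posets from $k$-dimensional molecules (pasting diagrams, up to unique isomorphism), boundaries by restriction, composition by pasting; the arrow $F(\iota)$ is written $F(W)\to V$. A strict functor $F\colon\mathsf{Mol}/U\to\mathsf{Mol}/V$ is active if $F(\mathrm{id}_U)=\mathrm{id}_V$. *)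

From HB Require Import structures.
From mathcomp Require Import all_boot.

Set Implicit Arguments.
Unset Strict Implicit.
Unset Printing Implicit Defensive.

(* The poset is presented by its Hasse
   diagram: [og_in y x] means y is an input face of x (y ∈ Δ⁻x),
   [og_out y x] means y is an output face of x (y ∈ Δ⁺x). *)
Record ogpos := Ogpos {
  og_car :> finType;
  og_in : rel og_car;
  og_out : rel og_car;
  og_dim : og_car -> nat;
  og_disj : forall x y : og_car, ~~ (og_in y x && og_out y x);
  og_dimS : forall x y : og_car, og_in y x || og_out y x -> og_dim x = (og_dim y).+1;
  og_dim0 : forall x : og_car, 0 < og_dim x -> exists y, og_in y x || og_out y x
}.

Section OgposDefs.
Variable P : ogpos.

(* orientation: b = true is "+", b = false is "-" *)
Definition face (b : bool) (y x : P) : bool :=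
  if b then og_out y x else og_in y x.

Definition cov (y x : P) : bool := og_in y x || og_out y x.

(* le y x : y <= x *)
Definition le (y x : P) : bool := connect (fun a b : P => cov b a) x y.

Definition closed (S : {set P}) : Prop :=
  forall x y : P, x \in S -> cov y x -> y \in S.

Definition clos (A : {set P}) : {set P} :=
  [set y | [exists x in A, le y x]].

Definition maxel (S : {set P}) (x : P) : bool :=
  (x \in S) && [forall y in S, le x y ==> (y == x)].

Definition Delta (n : nat) (b : bool) (S : {set P}) : {set P} :=
  [set x in S | (og_dim x == n) && [forall y in S, ~~ face (~~ b) x y]].

Definition bd (n : nat) (b : bool) (S : {set P}) : {set P} :=
  clos (Delta n b S :|: [set x in S | maxel S x && (og_dim x < n)]).

(* ∂_{n-1}^α S, with ∂_{-1}^α S = ∅ *)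
Definition bdp (n : nat) (b : bool) (S : {set P}) : {set P} :=
  if n is n'.+1 then bd n' b S else set0.

Definition dimS (S : {set P}) : nat := \max_(x in S) og_dim x.

Definition round (S : {set P}) : Prop :=
  forall k, k < dimS S ->
    bd k false S :&: bd k true S = bdp k false S :|: bdp k true S.

(* Molecules, as closed subsets of the ambient ogposet P.  Since pushouts
   of ogposets along inclusions of closed subsets are computed as unions,
   U #_k V is recognised internally as a union A ∪ B of closed subsets with
   A ∩ B = ∂_k^+ A = ∂_k^- B, and U ⇒ V as A ∪ B ∪ {t} where A ∩ B = ∂A = ∂B
   and Δ⁻t, Δ⁺t are the top-dimensional elements of A, B. *)
Inductive mol : {set P} -> Prop :=
| mol_point (x : P) : og_dim x = 0 -> mol [set x]
| mol_paste (k : nat) (A B : {set P}) :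
    mol A -> mol B ->
    A :&: B = bd k true A -> A :&: B = bd k false B ->
    mol (A :|: B)
| mol_arrow (n : nat) (A B : {set P}) (t : P) :
    mol A -> mol B -> round A -> round B ->
    dimS A = n -> dimS B = n ->
    bdp n false A = bdp n false B -> bdp n true A = bdp n true B ->
    A :&: B = bdp n false A :|: bdp n true A ->
    t \notin A :|: B ->
    (forall y, og_in y t = (y \in A) && (og_dim y == n)) ->
    (forall y, og_out y t = (y \in B) && (og_dim y == n)) ->
    mol (t |: (A :|: B)).

End OgposDefs.

Definition ismol (P : ogpos) : Prop := mol (P := P) setT.

Section Sub.
Variables (P : ogpos) (S : {set P}).

Lemma clos_closed (x y : P) : x \in clos S -> cov y x -> y \in clos S.
Proof.
rewrite !inE => /existsP [z /andP [zS lexz]] cyx.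
apply/existsP; exists z; rewrite zS /=.
rewrite /le; apply: connect_trans lexz _; exact: connect1.
Qed.

Definition subT : finType := {x : P | x \in clos S}.
Definition sub_in : rel subT := fun y x => og_in (val y) (val x).
Definition sub_out : rel subT := fun y x => og_out (val y) (val x).
Definition sub_dim (x : subT) : nat := og_dim (val x).

Lemma sub_disj (x y : subT) : ~~ (sub_in y x && sub_out y x).
Proof. exact: og_disj. Qed.

Lemma sub_dimS (x y : subT) : sub_in y x || sub_out y x -> sub_dim x = (sub_dim y).+1.
Proof. exact: og_dimS. Qed.

Lemma sub_dim0 (x : subT) : 0 < sub_dim x -> exists y, sub_in y x || sub_out y x.
Proof.
move=> /og_dim0 [y cy].
have yS : y \in clos S by apply: (clos_closed (valP x)).
by exists (exist _ y yS).
Qed.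

Definition subog : ogpos := Ogpos sub_disj sub_dimS sub_dim0.

Definition subincl : subog -> P := fun x => val x.
End Sub.

Definition is_morph (P Q : ogpos) (f : P -> Q) : Prop :=
  forall (b : bool) (x : P),
    [/\ (forall y, face b y x -> face b (f y) (f x)),
        (forall y1 y2, face b y1 x -> face b y2 x -> f y1 = f y2 -> y1 = y2)
      & (forall z, face b z (f x) -> exists2 y, face b y x & f y = z)].

Definition og_iso (P Q : ogpos) (f : P -> Q) : Prop :=
  is_morph f /\ bijective f.

Definition paste_decomp (Q : ogpos) (k : nat) (A B : {set Q}) : Prop :=
  [/\ mol A, mol B, A :|: B = setT, A :&: B = bd k true A & A :&: B = bd k false B].

Inductive subinc : forall (P Q : ogpos), (P -> Q) -> Prop :=
| subinc_iso (P Q : ogpos) (f : P -> Q) :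
    ismol P -> ismol Q -> og_iso f -> subinc f
| subinc_comp (P Q R : ogpos) (f : P -> Q) (g : Q -> R) :
    subinc f -> subinc g -> subinc (g \o f)
| subinc_pasteL (Q : ogpos) (k : nat) (A B : {set Q}) :
    paste_decomp k A B -> subinc (@subincl Q A)
| subinc_pasteR (Q : ogpos) (k : nat) (A B : {set Q}) :
    paste_decomp k A B -> subinc (@subincl Q B).

Definition submolecule (W U : ogpos) (f : W -> U) : Prop := subinc f.

(* The strict omega-category Mol/U, as a single set of cells (pasting
   diagrams W -> U, taken up to isomorphism over U) with boundary operators
   and pasting. *)
Definition cell (U : ogpos) : Type := {W : ogpos & W -> U}.

Definition cdom (U : ogpos) (c : cell U) : ogpos := projT1 c.
Definition cmap (U : ogpos) (c : cell U) : cdom c -> U := projT2 c.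
Arguments cmap {U} c _.

Definition mkcell (U W : ogpos) (f : W -> U) : cell U :=
  existT (fun W : ogpos => W -> U) W f.

Definition isCell (U : ogpos) (c : cell U) : Prop :=
  ismol (cdom c) /\ is_morph (cmap c).

Definition restr (U : ogpos) (c : cell U) (S : {set cdom c}) : cell U :=
  mkcell (fun x : subog S => cmap c (val x)).

Definition csrc (U : ogpos) (k : nat) (c : cell U) : cell U :=
  restr (bd k false [set: cdom c]).
Definition ctgt (U : ogpos) (k : nat) (c : cell U) : cell U :=
  restr (bd k true [set: cdom c]).

Definition cell_iso (U : ogpos) (c d : cell U) : Prop :=
  exists g : cdom c -> cdom d, og_iso g /\ forall x, cmap d (g x) = cmap c x.

Definition IsComp (U : ogpos) (k : nat) (c d e : cell U) : Prop :=
  exists A B : {set cdom e},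
    [/\ closed A, closed B, A :|: B = setT,
        A :&: B = bd k true A & A :&: B = bd k false B] /\
    cell_iso (restr A) c /\ cell_iso (restr B) d.

(* strict functors Mol/U -> Mol/V: well defined on isomorphism classes,
   send cells to cells, and preserve boundaries and pasting
   (preservation of identities/dimension follows in this one-sorted
   presentation). *)
Definition strict_functor (U V : ogpos) (F : cell U -> cell V) : Prop :=
  [/\ forall c, isCell c -> isCell (F c),
      forall c d, isCell c -> isCell d -> cell_iso c d -> cell_iso (F c) (F d),
      forall k c, isCell c ->
        cell_iso (F (csrc k c)) (csrc k (F c)) /\ cell_iso (F (ctgt k c)) (ctgt k (F c))
    & forall k c d e, isCell c -> isCell d -> isCell e ->
        IsComp k c d e -> IsComp k (F c) (F d) (F e)].

Definition idcell (U : ogpos) : cell U := mkcell (fun x : U => x).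

Definition active (U V : ogpos) (F : cell U -> cell V) : Prop :=
  cell_iso (F (idcell U)) (idcell V).

(* Submolecule inclusions are generated, under composition, by isomorphisms and the two
   inclusions U, V into a pasting U #_k V.  By induction along this generation one proves
   more: for every submolecule inclusion f : P -> Q and every pasting diagram g : Q -> U,
   the diagram F(g o f) is a submolecule of F(g) over V.  Isomorphic diagrams have
   isomorphic images, composites compose, and since F preserves pasting, F(g) is the
   pasting of copies of F(g o incl A) and F(g o incl B) whenever Q = A #_k B.  Taking
   g = id_U and using F(id_U) = id_V yields the theorem.  Throughout, molecules are
   transported along injective morphisms: these preserve and reflect all the boundary
   operations, so images and preimages of molecules are molecules. *)

From Pilot Require Import Defs.
From mathcomp Require Import all_boot.
From Stdlib Require Import FunctionalExtensionality.

Set Implicit Arguments.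
Unset Strict Implicit.
Unset Printing Implicit Defensive.

Section Ogposets.
Variable P : ogpos.
Implicit Types (x y z : P) (S : {set P}).

Lemma face_cov b y x : face b y x -> cov y x.
Proof. by rewrite /cov; case: b => /= ->; rewrite ?orbT. Qed.

Lemma cov_face y x : cov y x -> exists b, face b y x.
Proof. by case/orP => h; [exists false | exists true]. Qed.

Lemma le_cov y z x : cov z x -> le y z -> le y x.
Proof. by rewrite /le => czx lyz; apply: connect_trans lyz; apply: connect1. Qed.

Lemma closed_le S x y : Defs.closed S -> x \in S -> le y x -> y \in S.
Proof.
move=> cS + /connectP [p]; elim: p x => [|z p IH] x /= xS; first by move=> _ ->.
by case/andP=> czx pz ey; apply: IH pz ey; apply: cS czx.
Qed.

Lemma clos_id S : Defs.closed S -> clos S = S.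
Proof.
move=> cS; apply/setP => y; rewrite inE; apply/existsP/idP.
  by case=> x /andP [xS lyx]; apply: closed_le lyx.
by move=> yS; exists y; rewrite yS; apply: connect0.
Qed.

Lemma mol_closed S : mol S -> Defs.closed S.
Proof.
elim=> {S} [x dx | k A B _ cA _ cB _ _ | n A B t _ cA _ cB _ _ _ _ _ _ _ _ hin hout] x' y.
- by rewrite inE => /eqP -> /og_dimS; rewrite dx.
- by rewrite !inE => /orP [/cA h /h -> | /cB h /h ->]; rewrite ?orbT.
- rewrite !inE => /orP [/eqP -> | /orP [/cA h /h -> | /cB h /h ->]]; rewrite ?orbT //.
  by case/orP; [rewrite hin | rewrite hout] => /andP [-> _]; rewrite ?orbT.
Qed.

End Ogposets.

Lemma morph_dim (P Q : ogpos) (f : P -> Q) x : is_morph f -> og_dim (f x) = og_dim x.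
Proof.
move=> hf; elim: {x}(og_dim x) {-2}x (erefl (og_dim x)) => [|n IH] x dx.
  rewrite dx; case: (posnP (og_dim (f x))) => // /og_dim0 [z /cov_face [b hz]].
  have [_ _ /(_ z hz) [y /face_cov /og_dimS]] := hf b x.
  by rewrite dx.
have [y /cov_face [b hb]] : exists y, cov y x by apply: og_dim0; rewrite dx.
have dy : og_dim y = n by have := og_dimS (face_cov hb); rewrite dx => -[].
have [fface _ _] := hf b x.
by rewrite (og_dimS (face_cov (fface _ hb))) (IH y dy) dy dx.
Qed.

Lemma morph_comp (P Q R : ogpos) (f : P -> Q) (g : Q -> R) :
  is_morph f -> is_morph g -> is_morph (g \o f).
Proof.
move=> hf hg b x; have [f1 f2 f3] := hf b x; have [g1 g2 g3] := hg b (f x); split.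
- by move=> y /f1 /g1.
- by move=> y1 y2 h1 h2 /= /g2 e; apply: f2 => //; apply: e; apply: f1.
- by move=> z /g3 [w /f3 [y hy <-] <-]; exists y.
Qed.

Section Embeddings.
Variables (P Q : ogpos) (f : P -> Q).
Hypotheses (f_morph : is_morph f) (f_inj : injective f).
Implicit Types (x y : P) (S : {set P}).

Let dim_f x : og_dim (f x) = og_dim x. Proof. exact: morph_dim. Qed.

Lemma face_emb b x y : face b (f y) (f x) = face b y x.
Proof.
apply/idP/idP => [h | ]; last by have [h _ _] := f_morph b x; apply: h.
by have [_ _ /(_ _ h) [y' hy' /f_inj <-]] := f_morph b x.
Qed.

Lemma face_emb_image b x z : face b z (f x) -> exists y, z = f y.
Proof. by have [_ _ h] := f_morph b x => /h [y _ <-]; exists y. Qed.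

Lemma cov_emb x y : cov (f y) (f x) = cov y x.
Proof. by have := face_emb false x y; have := face_emb true x y; rewrite /cov /= => -> ->. Qed.

Lemma le_emb_image x z : le z (f x) -> exists2 y, z = f y & le y x.
Proof.
move=> /connectP [p]; elim: p x => [|a p IH] x /=.
  by move=> _ ->; exists x => //; apply: connect0.
case/andP=> /cov_face [b /[dup] hb /face_emb_image [a0 ea]] pa ez; subst a.
have [y -> ly] := IH a0 pa ez; exists y => //.
by apply: le_cov ly; rewrite -cov_emb; apply: face_cov hb.
Qed.

Lemma le_emb x y : le (f y) (f x) = le y x.
Proof.
apply/idP/idP => [/le_emb_image [y0 /f_inj -> //] |].
move=> /connectP [p]; elim: p x => [|a p IH] x /=; first by move=> _ ->; apply: connect0.
by case/andP=> cax pa ey; apply: (le_cov (z := f a)); [rewrite cov_emb | apply: IH pa ey].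
Qed.

Lemma clos_imset S : clos (f @: S) = f @: clos S.
Proof.
apply/setP => z; rewrite inE; apply/existsP/imsetP.
  case=> _ /andP [/imsetP [x xS ->] /le_emb_image [y -> lyx]].
  by exists y => //; rewrite inE; apply/existsP; exists x; rewrite xS.
case=> y; rewrite inE => /existsP [x /andP [xS lyx]] ->.
by exists (f x); rewrite imset_f //= le_emb.
Qed.

Lemma maxel_imset S x : maxel (f @: S) (f x) = maxel S x.
Proof.
rewrite /maxel (mem_imset _ _ f_inj); congr andb.
apply/forallP/forallP => H y.
  apply/implyP => yS; have := H (f y).
  by rewrite imset_f // le_emb (inj_eq f_inj).
apply/implyP => /imsetP [y0 yS ->]; rewrite le_emb (inj_eq f_inj).
by have := H y0; rewrite yS.
Qed.

Lemma Delta_imset n b S : Delta n b (f @: S) = f @: Delta n b S.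
Proof.
apply/setP => z; apply/idP/imsetP.
  rewrite inE => /andP [/imsetP [x xS ->] /andP [dn /forallP H]].
  exists x => //; rewrite inE xS -dim_f dn /=; apply/forallP => y.
  by apply/implyP => yS; have := H (f y); rewrite imset_f // face_emb.
case=> x; rewrite inE => /andP [xS /andP [dn /forallP H]] ->.
rewrite inE imset_f //= dim_f dn /=; apply/forallP => y.
apply/implyP => /imsetP [y0 y0S ->]; rewrite face_emb.
by have := H y0; rewrite y0S.
Qed.

Lemma bd_imset n b S : bd n b (f @: S) = f @: bd n b S.
Proof.
rewrite /bd Delta_imset -clos_imset imsetU; congr (clos (_ :|: _)).
apply/setP => z; apply/idP/imsetP.
  rewrite inE => /andP [/imsetP [x xS ->]]; rewrite maxel_imset dim_f => h.
  by exists x => //; rewrite inE xS.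
case=> x; rewrite inE => /andP [xS h] ->.
by rewrite inE imset_f //= maxel_imset dim_f.
Qed.

Lemma bdp_imset n b S : bdp n b (f @: S) = f @: bdp n b S.
Proof. by case: n => [|n] /=; [rewrite imset0 | apply: bd_imset]. Qed.

Lemma dimS_imset S : dimS (f @: S) = dimS S.
Proof.
rewrite /dimS big_imset /=; last by move=> x y _ _; apply: f_inj.
by apply: eq_bigr => x _; exact: dim_f.
Qed.

Lemma round_imset S : round (f @: S) <-> round S.
Proof.
rewrite /round dimS_imset; split => H k /H; rewrite !bd_imset !bdp_imset.
  by rewrite -(imsetI (in2W f_inj)) -imsetU; apply: (imset_inj f_inj).
by rewrite -(imsetI (in2W f_inj)) -imsetU => ->.
Qed.

Lemma face_imset b t (A : {set P}) n :
  (forall y, face b y t = (y \in A) && (og_dim y == n)) ->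
  forall z, face b z (f t) = (z \in f @: A) && (og_dim z == n).
Proof.
move=> H z; case Hz: (face b z (f t)).
  have [y ez] := face_emb_image Hz; subst z; move: Hz.
  by rewrite face_emb H (mem_imset _ _ f_inj) dim_f => ->.
apply/esym/negbTE/negP => /andP [/imsetP [y yA ez] dn]; subst z; move: Hz.
by rewrite face_emb H yA -dim_f dn.
Qed.

Lemma mol_imset S : mol S -> mol (f @: S).
Proof.
elim=> {S} [x dx | k A B _ mA _ mB hA hB | n A B t _ mA _ mB rA rB dA dB e1 e2 e3 tn hin hout].
- by rewrite imset_set1; constructor; rewrite dim_f.
- rewrite imsetU; apply: (mol_paste (k := k)) mA mB _ _;
    rewrite -(imsetI (in2W f_inj)) bd_imset; [by rewrite hA | by rewrite hB].
- rewrite imsetU1 imsetU; apply: (mol_arrow (n := n)) => //.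
  + exact/round_imset.
  + exact/round_imset.
  + by rewrite dimS_imset.
  + by rewrite dimS_imset.
  + by rewrite !bdp_imset e1.
  + by rewrite !bdp_imset e2.
  + by rewrite -(imsetI (in2W f_inj)) !bdp_imset -imsetU e3.
  + by rewrite -imsetU (mem_imset _ _ f_inj).
  + exact: (face_imset (b := false)).
  + exact: (face_imset (b := true)).
Qed.

Lemma imset_preimset (T : {set Q}) S : T \subset f @: S -> f @: (f @^-1: T) = T.
Proof.
move=> sTS; apply/setP => z; apply/imsetP/idP => [[x] | zT]; first by rewrite inE => ? ->.
by have /imsetP [x _ ez] := subsetP sTS z zT; exists x; rewrite // inE -ez.
Qed.

Lemma mol_of_imset (T : {set Q}) : mol T -> forall S, T = f @: S -> mol S.
Proof.
elim=> {T} [z dz | k A B _ IHA _ IHB hA hB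
            | n A B t _ IHA _ IHB rA rB dA dB e1 e2 e3 tn hin hout] S eT.
- have /imsetP [x _ ez] : z \in f @: S by rewrite -eT set11.
  rewrite ez -imset_set1 in eT; rewrite -(imset_inj f_inj eT).
  by constructor; rewrite -dim_f -ez.
- have sA : A \subset f @: S by rewrite -eT subsetUl.
  have sB : B \subset f @: S by rewrite -eT subsetUr.
  move: (f @^-1: A) (f @^-1: B) (imset_preimset sA) (imset_preimset sB) => A0 B0 eA eB.
  subst A B.
  rewrite -(imsetI (in2W f_inj)) !bd_imset in hA hB.
  rewrite -imsetU in eT; rewrite -(imset_inj f_inj eT).
  apply: (mol_paste (k := k)); [exact: IHA | exact: IHB | |].
  + exact: (imset_inj f_inj hA).
  + exact: (imset_inj f_inj hB).
- have sA : A \subset f @: S by rewrite -eT setUCA subsetUl.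
  have sB : B \subset f @: S by rewrite -eT setUA subsetUr.
  have /imsetP [t0 _ et] : t \in f @: S by rewrite -eT setU11.
  move: (f @^-1: A) (f @^-1: B) (imset_preimset sA) (imset_preimset sB) => A0 B0 eA eB.
  subst t A B; rewrite -imsetU -imsetU1 in eT; rewrite -(imset_inj f_inj eT).
  rewrite !bdp_imset in e1 e2 e3; rewrite -(imsetI (in2W f_inj)) -imsetU in e3.
  apply: (mol_arrow (n := n)).
  + exact: IHA.
  + exact: IHB.
  + exact/round_imset.
  + exact/round_imset.
  + by rewrite -dimS_imset.
  + by rewrite -dimS_imset.
  + exact: (imset_inj f_inj e1).
  + exact: (imset_inj f_inj e2).
  + exact: (imset_inj f_inj e3).
  + by rewrite -imsetU (mem_imset _ _ f_inj) in tn.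
  + move=> y; have := hin (f y).
    by rewrite (mem_imset _ _ f_inj) dim_f -/(face false _ _) face_emb.
  + move=> y; have := hout (f y).
    by rewrite (mem_imset _ _ f_inj) dim_f -/(face true _ _) face_emb.
Qed.

Lemma mol_imsetE S : mol (f @: S) <-> mol S.
Proof. by split => [/mol_of_imset /(_ S erefl) | /mol_imset]. Qed.

End Embeddings.

Lemma iso_inv_morph (P Q : ogpos) (f : P -> Q) (g : Q -> P) :
  og_iso f -> cancel f g -> cancel g f -> is_morph g.
Proof.
move=> [f_morph _] fK gK b x; have f_inj := can_inj fK.
split=> [y | y1 y2 _ _ | z].
- by rewrite -(face_emb f_morph f_inj) !gK.
- by move/(can_inj gK).
- by move=> h; exists (f z); rewrite ?fK // -[x]gK (face_emb f_morph f_inj).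
Qed.

Lemma ismol_iso (P Q : ogpos) (f : P -> Q) : og_iso f -> ismol Q -> ismol P.
Proof.
move=> /[dup] f_iso [_ [g fK gK]] mQ; rewrite /ismol.
have <- : g @: setT = setT by apply/setP => x; rewrite inE -(fK x) imset_f.
exact: mol_imset (iso_inv_morph f_iso fK gK) (can_inj gK) _ mQ.
Qed.

Lemma subincl_morph (P : ogpos) (S : {set P}) : is_morph (@subincl P S).
Proof.
move=> b x; split=> // [y1 y2 _ _ | z h]; first exact: val_inj.
have zS : z \in clos S by apply: clos_closed (valP x) (face_cov h).
by exists (exist _ z zS).
Qed.

Lemma ismol_subog (P : ogpos) (S : {set P}) : Defs.closed S -> ismol (subog S) <-> mol S.
Proof.
move=> cS; have := mol_imsetE (subincl_morph (S := S)) val_inj setT.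
suff -> : @subincl P S @: setT = clos S by rewrite clos_id // => h; apply: iff_sym.
apply/setP => z; apply/imsetP/idP => [[x _ ->] | zS]; first exact: valP.
by exists (exist _ z zS).
Qed.

Lemma iso_id (P : ogpos) : og_iso (fun x : P => x).
Proof. by split; [move=> b x; split=> // z h; exists z | exists id]. Qed.

Lemma subinc_ismol (P Q : ogpos) (f : P -> Q) : subinc f -> ismol P.
Proof.
elim=> // R k A B [mA mB _ _ _];
  [exact/(ismol_subog (mol_closed mA)) | exact/(ismol_subog (mol_closed mB))].
Qed.

Lemma subinc_morph (P Q : ogpos) (f : P -> Q) : subinc f -> is_morph f.
Proof.
by elim=> [P' Q' f' _ _ [] | P' Q' R f' g _ hf _ hg | R k A B _ | R k A B _];
  [ | apply: morph_comp | apply: subincl_morph | apply: subincl_morph].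
Qed.

Section Cells.
Variable V : ogpos.
Implicit Types c d e : cell V.

Definition sub_cell c d : Prop :=
  exists2 h : cdom c -> cdom d, subinc h & forall x, cmap d (h x) = cmap c x.

Lemma sub_cell_trans c d e : sub_cell c d -> sub_cell d e -> sub_cell c e.
Proof.
move=> [h1 s1 e1] [h2 s2 e2]; exists (h2 \o h1); first exact: subinc_comp.
by move=> x /=; rewrite e2 e1.
Qed.

Lemma cell_iso_sym c d : cell_iso c d -> cell_iso d c.
Proof.
move=> [g [g_iso eg]]; have [_ [g' gK g'K]] := g_iso.
exists g'; split; first by split; [apply: iso_inv_morph g_iso gK g'K | exists g].
by move=> y; rewrite -eg g'K.
Qed.

Lemma ismol_cell_iso c d : cell_iso c d -> ismol (cdom d) -> ismol (cdom c).
Proof. by move=> [g [g_iso _]]; apply: ismol_iso g_iso. Qed.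

Lemma sub_cell_iso c d : ismol (cdom d) -> cell_iso c d -> sub_cell c d.
Proof.
move=> md /[dup] /ismol_cell_iso /(_ md) mc [g [g_iso eg]].
by exists g => //; apply: subinc_iso.
Qed.

Lemma sub_cell_restr e c (A : {set cdom e}) :
  ismol (cdom c) -> cell_iso (restr A) c -> subinc (@subincl _ A) -> sub_cell c e.
Proof.
move=> mc iso sA; apply: (sub_cell_trans (d := restr A)); last by exists (@subincl _ A).
by apply: sub_cell_iso (cell_iso_sym iso); apply: ismol_cell_iso iso mc.
Qed.

End Cells.

Lemma isCell_comp (P Q U : ogpos) (f : P -> Q) (g : Q -> U) :
  ismol P -> is_morph f -> isCell (mkcell g) -> isCell (mkcell (g \o f)).
Proof. by move=> mP mf [_ mg]; split=> //; apply: morph_comp. Qed.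

Section Functor.
Variables (U V : ogpos) (F : cell U -> cell V).
Hypothesis hF : strict_functor F.

Lemma paste_sub_cell (Q : ogpos) k (A B : {set Q}) (g : Q -> U) :
  paste_decomp k A B -> isCell (mkcell g) ->
  sub_cell (F (mkcell (g \o @subincl Q A))) (F (mkcell g)) /\
  sub_cell (F (mkcell (g \o @subincl Q B))) (F (mkcell g)).
Proof.
case: hF => F_cell _ _ F_comp [mA mB eU eA eB] mg.
have cellX X : mol X -> isCell (mkcell (g \o @subincl Q X)).
  move=> mX; apply: isCell_comp mg; last exact: subincl_morph.
  exact/(ismol_subog (mol_closed mX)).
have [A' [B' [[clA clB eU' eA' eB'] [isoA isoB]]]] :
    IsComp k (F (mkcell (g \o @subincl Q A))) (F (mkcell (g \o @subincl Q B))) (F (mkcell g)).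
  apply: F_comp (cellX A mA) (cellX B mB) mg _.
  exists A, B; split; first by split=> //; apply: mol_closed.
  by split; exists id; split=> //; apply: iso_id.
have [[mFA _] [mFB _]] := (F_cell _ (cellX A mA), F_cell _ (cellX B mB)).
have pd' : paste_decomp k A' B'.
  split=> //; [apply/(ismol_subog clA); apply: ismol_cell_iso isoA mFA |
               apply/(ismol_subog clB); apply: ismol_cell_iso isoB mFB].
by split; [apply: sub_cell_restr mFA isoA (subinc_pasteL pd') |
           apply: sub_cell_restr mFB isoB (subinc_pasteR pd')].
Qed.

Lemma subinc_sub_cell (P Q : ogpos) (f : P -> Q) : subinc f ->
  forall g : Q -> U, isCell (mkcell g) -> sub_cell (F (mkcell (g \o f))) (F (mkcell g)).
Proof.
case: hF => F_cell F_iso _ _.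
elim=> {P Q f} [P Q f mP mQ f_iso | P Q R f1 f2 _ IH1 s2 IH2 | Q k A B pd | Q k A B pd] g mg.
- have mgf : isCell (mkcell (g \o f)) by apply: isCell_comp mg; case: f_iso.
  apply: sub_cell_iso; first exact: (F_cell _ mg).1.
  by apply: F_iso mgf mg _; exists f.
- have mgf2 : isCell (mkcell (g \o f2)).
    by apply: isCell_comp mg; [apply: subinc_ismol s2 | apply: subinc_morph].
  exact: sub_cell_trans (IH1 _ mgf2) (IH2 _ mg).
- exact: (paste_sub_cell pd mg).1.
- exact: (paste_sub_cell pd mg).2.
Qed.

End Functor.

Theorem mainTheorem19 (U V : ogpos) (F : cell U -> cell V) :
  ismol U -> ismol V -> strict_functor F -> active F ->
  forall (W : ogpos) (i : W -> U), submolecule i ->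
    submolecule (cmap (F (mkcell i))).
Proof.
move=> mU mV hF F_id W i si.
have id_cell : isCell (idcell U) by split=> //; case: (iso_id U).
have [h sh eh] : sub_cell (F (mkcell i)) (idcell V).
  exact: sub_cell_trans (subinc_sub_cell hF si id_cell) (sub_cell_iso (d := idcell V) mV F_id).
suff -> : cmap (F (mkcell i)) = h by [].
by apply: functional_extensionality => x; rewrite -eh.
Qed.
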